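(* For a given policy $\pi$ and goal $s_g$, the Wasserstein distance of the state visitation measure of $\pi$ from the goal distribution $\rho_g=\delta(s_g)$ under the ground metric $d^\pi_T$ can be written as $$W_1^\pi(\rho_\pi,\rho_g)=\mathop{\mathbb{E}}_{s_0\sim\rho_0}\left[h\big(d^\pi_T(s_0,s_g)\big)+\frac{\gamma}{1-\gamma}\big(\Delta^\pi_{\text{Jensen}}(s_0)-1\big)\right],$$ where $h$ is an increasing function of $d^\pi_T$.
   Context: A goal-conditioned MDP has discrete state space $\mathcal{S}$, discrete actions, goal-dependent transitions $P(\cdot\mid s,a,s_g)$, start-state distribution $\rho_0$, and discount $\gamma\in[0,1)$; reward is $\mathbb{I}[s_{t+1}=s_g]$ and the episode enters an absorbing zero-reward state after reaching $s_g$. For a policy $\pi$, $T(s_g\mid\pi,s)$ is the first time-step at which $s_g$ is encountered starting from $s$ and following $\pi$; $d^\pi_T(s,s_g):=\mathbb{E}[T(s_g\mid\pi,s)]$ is the time-step quasimetric, and $V^\pi(s\mid s_g)=\mathbb{E}[\gamma^{T(s_g\mid\pi,s)}]$. The Jensen gap is $\Delta^\pi_{\text{Jensen}}(s):=V^\pi(s\mid s_g)-\gamma^{d^\pi_T(s,s_g)}$. The goal-conditioned state visitation distribution is $\rho_\pi(s\mid s_g)=\mathbb{E}_{s_0\sim\rho_0}\big[(1-\gamma)\sum_{t=0}^\infty\gamma^t P(s_t=s\mid\pi,s_g)\big]$, and $\rho_g=\delta(s_g)$ is the Dirac measure at the goal. The Wasserstein-1 distance under ground quasimetric $d^\pi_T$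 is $W_1^\pi(\rho_\pi,\rho_g)=\sum_{s\in\mathcal{S}}\rho_\pi(s\mid s_g)\,d^\pi_T(s,s_g)$. *)

From HB Require Import structures.
From mathcomp Require Import all_boot all_order all_algebra.
From mathcomp Require Import all_classical all_reals all_analysis.
Set Implicit Arguments. Unset Strict Implicit. Unset Printing Implicit Defensive.
Import Order.TTheory GRing.Theory Num.Theory numFieldNormedType.Exports.
Local Open Scope ring_scope.

Section GCMDP.
Variables (R : realType) (S A : finType).

(* Goal-conditioned transitions: P s a g s' = P(s' | s, a, s_g). *)
Definition is_transition (P : S -> A -> S -> S -> R) :=
  forall s a g, (forall s', 0 <= P s a g s') /\ \sum_s' P s a g s' = 1.

(* Goal-conditioned stochastic policy: pi g s a = pi(a | s, s_g). *)
Definition is_policy (pi : S -> S -> A -> R) :=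
  forall g s, (forall a, 0 <= pi g s a) /\ \sum_a pi g s a = 1.

Definition is_distribution (rho : S -> R) :=
  (forall s, 0 <= rho s) /\ \sum_s rho s = 1.

Variables (P : S -> A -> S -> S -> R) (pi : S -> S -> A -> R) (g : S).

Definition kernel (s s' : S) : R := \sum_a pi g s a * P s a g s'.

(* hitp t s = Pr[ T(g | pi, s) = t ]: first-passage probabilities *)
Fixpoint hitp (t : nat) (s : S) : R :=
  match t with
  | 0 => (s == g)%:R
  | t'.+1 => (s != g)%:R * \sum_s' kernel s s' * hitp t' s'
  end.

Definition dT (s : S) : R := limn (series (fun t => t%:R * hitp t s)).

Definition Vpi (gamma : R) (s : S) : R :=
  limn (series (fun t => gamma ^+ t * hitp t s)).

Definition jensen_gap (gamma : R) (s : S) : R := Vpi gamma s - powR gamma (dT s).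

Variable rho0 : S -> R.

(* occ t s = Pr[s_t = s], where after reaching g the episode leaves S
   (absorbing zero-reward state, not an element of S). *)
Fixpoint occ (t : nat) (s : S) : R :=
  match t with
  | 0 => rho0 s
  | t'.+1 => \sum_(s' | s' != g) occ t' s' * kernel s' s
  end.

Definition visitation (gamma : R) (s : S) : R :=
  (1 - gamma) * limn (series (fun t => gamma ^+ t * occ t s)).

(* W_1^pi(rho_pi, delta(g)) under ground quasimetric d^pi_T *)
Definition W1 (gamma : R) : R := \sum_s visitation gamma s * dT s.

End GCMDP.

(* The discounted visitation measure nu satisfies the balance equation
   nu(s) = (1 - gamma) rho0(s) + gamma sum_{s' <> g} nu(s') K(s', s).
   Integrating it against 1, V and d_T, and using the first-step equations
   V(s) = gamma (K V)(s) and d_T(s) = 1 + (K d_T)(s) off the goal, yields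
   nu(g) = (1 - gamma) E[V(s0)], nu(S \ {g}) = 1 - E[V(s0)] and
   (1 - gamma) W1 = (1 - gamma) E[d_T(s0)] - gamma nu(S \ {g}).  Hence
   W1 = E[d_T(s0)] + gamma / (1 - gamma) (E[V(s0)] - 1), which is the claim with
   h(x) = x + gamma / (1 - gamma) gamma^x; h increases because
   -gamma ln gamma < 1 - gamma. *)

From Pilot Require Import Defs.
From HB Require Import structures.
From mathcomp Require Import all_boot all_order all_algebra.
From mathcomp Require Import all_classical all_reals all_analysis.
From mathcomp Require Import ring lra.
Import Order.TTheory GRing.Theory Num.Theory numFieldNormedType.Exports.
Local Open Scope ring_scope.
Local Open Scope classical_set_scope.

Lemma limn_shiftS {K : numFieldType} {V : normedModType K} {u v : nat -> V} {l : V} :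
  (forall n, u n.+1 = v n) -> v @ \oo --> l -> limn u = l.
Proof.
move=> uSv vl; apply: cvg_lim => //; rewrite -cvg_shiftS.
by under eq_fun do rewrite uSv.
Qed.

Lemma cvgn_sum {K : numFieldType} {V : normedModType K} (I : Type) (r : seq I)
    (Pr : pred I) (f : I -> nat -> V) (l : I -> V) :
  (forall i, Pr i -> f i n @[n --> \oo] --> l i) ->
  \sum_(i <- r | Pr i) f i n @[n --> \oo] --> \sum_(i <- r | Pr i) l i.
Proof. by apply: cvg_big => //; exact: add_continuous. Qed.

Section increasing_shape.
Context {R : realType}.

Lemma powRB_le_ln (c x y : R) : 0 < c -> c <= 1 -> 0 <= x -> x <= y ->
  c `^ x - c `^ y <= (y - x) * - ln c.
Proof.
move=> c0 c1 x0 xy; rewrite /powR gt_eqF //.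
have L0 : ln c <= 0 by exact: ln_le0.
have -> : y * ln c = x * ln c + (y - x) * ln c by ring.
rewrite expRD -{1}[expR (x * ln c)]mulr1 -mulrBr.
have ex1 : expR (x * ln c) <= 1 by rewrite expR_le1 mulr_ge0_le0.
have e0 : 0 <= 1 - expR ((y - x) * ln c).
  by rewrite subr_ge0 expR_le1 mulr_ge0_le0 // subr_ge0.
apply: le_trans (ler_piMl e0 ex1) _.
have := expR_ge1Dx ((y - x) * ln c); lra.
Qed.

Lemma mul_oppr_ln_lt (c : R) : 0 < c -> c < 1 -> c * - ln c < 1 - c.
Proof.
move=> c0 c1; have lnc0 : - ln c != 0 by rewrite oppr_eq0 lt_eqF // ln_lt0 ?c0.
have := expR_gt1Dx lnc0; rewrite expRN lnK ?posrE // => lt1.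
have := lt1; rewrite -(ltr_pM2l c0) mulfV ?gt_eqF //; lra.
Qed.

Definition hT (gamma x : R) : R := x + gamma / (1 - gamma) * gamma `^ x.

Lemma hT_increasing (gamma x y : R) : 0 <= gamma -> gamma < 1 -> 0 <= x -> x < y ->
  hT gamma x < hT gamma y.
Proof.
move=> g0 g1 x0 xy; rewrite /hT.
have [->|gn0] := eqVneq gamma 0; first by rewrite !mul0r !addr0.
have gpos : 0 < gamma by rewrite lt_neqAle eq_sym gn0.
have cpos : 0 < gamma / (1 - gamma) by rewrite divr_gt0 // subr_gt0.
have le_d := ler_wpM2l (ltW cpos) (@powRB_le_ln _ _ _ gpos (ltW g1) x0 (ltW xy)).
suff : gamma / (1 - gamma) * ((y - x) * - ln gamma) < y - x by lra.
rewrite mulrAC ltr_pdivrMr ?subr_gt0 // mulrCA ltr_pM2l ?subr_gt0 //.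
exact: mul_oppr_ln_lt.
Qed.

End increasing_shape.

Section goal_conditioned_chain.
Variables (R : realType) (S A : finType) (P : S -> A -> S -> S -> R)
  (pi : S -> S -> A -> R) (g : S) (gamma : R).
Hypotheses (HP : is_transition P) (Hpi : is_policy pi).
Hypotheses (g0 : 0 <= gamma) (g1 : gamma < 1).

Local Notation k := (Defs.kernel P pi g).
Local Notation hitp := (hitp P pi g).
Local Notation dT := (dT P pi g).
Local Notation Vpi := (Vpi P pi g gamma).

Lemma kernel_ge0 s s' : 0 <= k s s'.
Proof.
apply: sumr_ge0 => a _; apply: mulr_ge0; first exact: (Hpi g s).1.
exact: (HP s a g).1.
Qed.

Lemma kernel_sum1 s : \sum_s' k s s' = 1.
Proof.
rewrite /Defs.kernel exchange_big /=.
under eq_bigr => a _ do rewrite -mulr_sumr (HP s a g).2 mulr1.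
exact: (Hpi g s).2.
Qed.

Lemma hitp_ge0 t s : 0 <= hitp t s.
Proof.
elim: t s => [|t IH] s /=; first by case: (s == g).
apply: mulr_ge0; first by case: (s != g).
by apply: sumr_ge0 => s' _; rewrite mulr_ge0 ?kernel_ge0.
Qed.

Lemma dT_goal : dT g = 0.
Proof.
apply: (limn_shiftS (v := fun=> 0)) (cvg_cst _) => n.
rewrite seriesEord /= big1 // => -[[|t] _] _ /=; first by rewrite mul0r.
by rewrite eqxx mul0r mulr0.
Qed.

Lemma Vpi_goal : Vpi g = 1.
Proof.
rewrite /Defs.Vpi; apply: (limn_shiftS (v := fun=> (1 : R))) (cvg_cst _) => n.
rewrite seriesEord /= big_ord_recl /= eqxx expr0 mul1r big1 ?addr0 // => i _.
by rewrite mul0r mulr0.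
Qed.

Hypothesis hit_surely : forall s, series (fun t => hitp t s) @ \oo --> (1 : R).
Hypothesis cvg_hitting_time : forall s, cvgn (series (fun t => t%:R * hitp t s)).

Lemma cvg_Vpi_series s : cvgn (series (fun t => gamma ^+ t * hitp t s)).
Proof.
apply: (@series_le_cvg _ _ (hitp^~ s)) => [n|n|n|].
- by rewrite mulr_ge0 ?exprn_ge0 ?hitp_ge0.
- exact: hitp_ge0.
- by rewrite ler_piMl ?hitp_ge0 // exprn_ile1 // ltW.
- exact: cvgP (hit_surely s).
Qed.

Lemma dT_rec s : s != g -> dT s = 1 + \sum_s' k s s' * dT s'.
Proof.
move=> sg; apply: (limn_shiftS (v := fun n => \sum_s' k s s' *
   (series (hitp^~ s') n + series (fun t => t%:R * hitp t s') n))).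
  move=> n; rewrite !seriesEord /= big_ord_recl /= mul0r add0r.
  under [RHS]eq_bigr => s' _ do rewrite -big_split /= big_mkord mulr_sumr.
  rewrite exchange_big /=; apply: eq_bigr => i _.
  rewrite sg mul1r mulr_sumr; apply: eq_bigr => s' _.
  rewrite /bump /= natrD; ring.
have -> : 1 + \sum_s' k s s' * dT s' = \sum_s' k s s' * (1 + dT s').
  by under [RHS]eq_bigr => s' _ do rewrite mulrDr mulr1; rewrite big_split /= kernel_sum1.
by apply: cvgn_sum => s' _; apply: cvgMl_tmp; apply: cvgD => //; exact: cvg_hitting_time.
Qed.

Lemma Vpi_rec s : s != g -> Vpi s = gamma * \sum_s' k s s' * Vpi s'.
Proof.
move=> sg; rewrite {1}/Defs.Vpi.
apply: (limn_shiftS (v := fun n => gamma * \sum_s' k s s' *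
   series (fun t => gamma ^+ t * hitp t s') n)).
  move=> n; rewrite !seriesEord /= big_ord_recl /= (negbTE sg) mulr0 add0r mulr_sumr.
  under [RHS]eq_bigr => s' _ do rewrite !seriesEord !mulr_sumr.
  rewrite exchange_big /=; apply: eq_bigr => i _.
  rewrite mul1r !mulr_sumr; apply: eq_bigr => s' _.
  rewrite /bump /= exprS; ring.
by apply: cvgMl_tmp; apply: cvgn_sum => s' _; apply: cvgMl_tmp; exact: cvg_Vpi_series.
Qed.

Variable rho0 : S -> R.
Hypothesis Hrho : is_distribution rho0.

Local Notation occ := (occ P pi g rho0).
Local Notation visitation := (visitation P pi g rho0 gamma).

Lemma occ_ge0 t s : 0 <= occ t s.
Proof.
elim: t s => [|t IH] s /=; first exact: Hrho.1.
by apply: sumr_ge0 => s' _; rewrite mulr_ge0 ?kernel_ge0.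
Qed.

Lemma sum_occ_le1 t : \sum_s occ t s <= 1.
Proof.
elim: t => [|t IH] /=; first by rewrite Hrho.2.
rewrite exchange_big /=; apply: le_trans IH.
rewrite [leRHS](bigID (fun s => s != g)) /= -[leLHS]addr0 lerD ?sumr_ge0 //.
  by apply: ler_sum => s _; rewrite -mulr_sumr kernel_sum1 mulr1.
by move=> s _; exact: occ_ge0.
Qed.

Lemma occ_le1 t s : occ t s <= 1.
Proof.
apply: le_trans (sum_occ_le1 t); rewrite (bigD1 s) //= lerDl.
by apply: sumr_ge0 => s' _; exact: occ_ge0.
Qed.

Lemma cvg_discounted_occ s : cvgn (series (fun t => gamma ^+ t * occ t s)).
Proof.
apply: (@series_le_cvg _ _ (geometric 1 gamma)) => [n|n|n|].
- by rewrite mulr_ge0 ?exprn_ge0 ?occ_ge0.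
- exact: geometric_ge0.
- by rewrite /= mul1r ler_piMr ?exprn_ge0 ?occ_le1.
- by apply: is_cvg_geometric_series; rewrite ger0_norm.
Qed.

Lemma discounted_occ_rec s :
  limn (series (fun t => gamma ^+ t * occ t s)) = rho0 s +
  gamma * \sum_(s' | s' != g) limn (series (fun t => gamma ^+ t * occ t s')) * k s' s.
Proof.
apply: (limn_shiftS (v := fun n => rho0 s + gamma *
    \sum_(s' | s' != g) series (fun t => gamma ^+ t * occ t s') n * k s' s)).
  move=> n; rewrite !seriesEord /= big_ord_recl /= expr0 mul1r; congr (_ + _).
  rewrite mulr_sumr; under [RHS]eq_bigr => s' _ do rewrite seriesEord /= mulr_suml mulr_sumr.
  under [LHS]eq_bigr => i _ do rewrite mulr_sumr.
  rewrite exchange_big /=; apply: eq_bigr => s' _; apply: eq_bigr => i _.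
  by rewrite exprS /bump /= add0n !mulrA.
apply: cvgD; first exact: cvg_cst.
apply: cvgMl_tmp; apply: cvgn_sum => s' _; apply: cvgMr_tmp; exact: cvg_discounted_occ.
Qed.

Lemma visitation_rec s :
  visitation s = (1 - gamma) * rho0 s + gamma * \sum_(s' | s' != g) visitation s' * k s' s.
Proof.
rewrite /Defs.visitation discounted_occ_rec mulrDr; congr (_ + _).
rewrite mulrCA; congr (_ * _); rewrite mulr_sumr.
by apply: eq_bigr => s' _; rewrite mulrA.
Qed.

Lemma sum_visitation_mul (x : S -> R) : \sum_s visitation s * x s =
  (1 - gamma) * \sum_s rho0 s * x s +
  gamma * \sum_(s' | s' != g) visitation s' * \sum_s k s' s * x s.
Proof.
under eq_bigr => s _ do rewrite visitation_rec mulrDl.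
rewrite big_split /= mulr_sumr; congr (_ + _).
  by apply: eq_bigr => s _; rewrite mulrA.
rewrite mulr_sumr; under [RHS]eq_bigr => s' _ do rewrite mulr_sumr mulr_sumr.
under eq_bigr => s _ do rewrite -mulrA mulr_suml mulr_sumr.
by rewrite exchange_big /=; apply: eq_bigr => s' _; apply: eq_bigr => s _; ring.
Qed.

Lemma visitation_goal : visitation g = (1 - gamma) * \sum_s rho0 s * Vpi s.
Proof.
have kV : gamma * \sum_(s' | s' != g) visitation s' * \sum_s k s' s * Vpi s =
          \sum_(s | s != g) visitation s * Vpi s.
  by rewrite mulr_sumr; apply: eq_bigr => s' sg; rewrite mulrCA -Vpi_rec.
by have := sum_visitation_mul Vpi; rewrite kV (bigD1 g) //= Vpi_goal mulr1 => /addIr.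
Qed.

Lemma sum_visitation_off_goal :
  \sum_(s | s != g) visitation s = 1 - \sum_s rho0 s * Vpi s.
Proof.
have k1 s' : \sum_s k s' s * 1 = 1.
  by under eq_bigr do rewrite mulr1; exact: kernel_sum1.
have := sum_visitation_mul (fun=> 1); rewrite (bigD1 g) //= visitation_goal.
under eq_bigr => s _ do rewrite mulr1.
under [in X in _ = X]eq_bigr => s _ do rewrite mulr1.
under [in X in _ = _ + X]eq_bigr => s _ do rewrite k1 mulr1.
rewrite Hrho.2 mulr1 => e.
have gne : 1 - gamma != 0 by rewrite subr_eq0 gt_eqF.
apply: (mulfI gne); lra.
Qed.

Lemma W1E : W1 P pi g rho0 gamma =
  \sum_s rho0 s * dT s + gamma / (1 - gamma) * (\sum_s rho0 s * Vpi s - 1).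
Proof.
have kd : \sum_(s' | s' != g) visitation s' * \sum_s k s' s * dT s =
          W1 P pi g rho0 gamma - \sum_(s | s != g) visitation s.
  rewrite /W1 [X in _ = X - _](bigD1 g) //= dT_goal mulr0 add0r -sumrB.
  by apply: eq_bigr => s' sg; rewrite (dT_rec _ sg); ring.
have := sum_visitation_mul dT; rewrite kd sum_visitation_off_goal -/(W1 _ _ _ _ _) => e.
have gne : 1 - gamma != 0 by rewrite subr_eq0 gt_eqF.
apply: (mulfI gne); rewrite mulrDr mulrA mulrCA divff // mulr1; lra.
Qed.

End goal_conditioned_chain.

Theorem proposition3 (R : realType) (gamma : R) :
  0 <= gamma -> gamma < 1 ->
  exists h : R -> R,
    (forall x y : R, 0 <= x -> x < y -> h x < h y) /\
    forall (S A : finType) (P : S -> A -> S -> S -> R) (pi : S -> S -> A -> R)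
           (g : S) (rho0 : S -> R),
      is_transition P -> is_policy pi -> is_distribution rho0 ->
      (forall s, cvgn (series (fun t => hitp P pi g t s)) /\
                 limn (series (fun t => hitp P pi g t s)) = 1 /\
                 cvgn (series (fun t => t%:R * hitp P pi g t s))) ->
      W1 P pi g rho0 gamma =
      \sum_s0 rho0 s0 * (h (dT P pi g s0)
                         + gamma / (1 - gamma) * (jensen_gap P pi g gamma s0 - 1)).
Proof.
move=> g0 g1; exists (hT gamma); split=> [x y|S A P pi g rho0 HP Hpi Hrho Hh].
  exact: hT_increasing.
have hit_surely s : series (hitp P pi g ^~ s) @ \oo --> (1 : R).
  by have [cvg_s [<- _]] := Hh s.
have cvg_hitting_time s := (Hh s).2.2.
rewrite W1E //.
set c := gamma / (1 - gamma).
rewrite [RHS](eq_bigr (fun s => rho0 s * dT P pi g s + c * (rho0 s * Vpi P pi g gamma s)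
                          - c * rho0 s)) => [|s _]; last by rewrite /hT /jensen_gap -/c; ring.
by rewrite sumrB big_split /= -!mulr_sumr Hrho.2; ring.
Qed.
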